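(* Let $n\ge1$ and $d\ge1$, and let $w$ be a positive weight vector. Then there is a design $D\subset\mathbb{R}^d$ with $n$ points which minimises $A(w,L)$ among all designs of sample size $n$ and their identifiable staircases; more precisely, the quantity $$A^*(w,n)=\min_{D:\,|D|=n}\ \min_{L\in\mathcal{L}_a(D)}A(w,L)$$ is achieved by a generic design.
   Context: A design $D\subset\mathbb{R}^d$ is a finite set of $n=|D|$ distinct points. A model basis is a finite set $L\subset\mathbb{Z}^d_{\ge 0}$; it is identifiable by $D$ if $|L|=n$ and the matrix $[x^\alpha]_{x\in D,\alpha\in L}$ (with $x^\alpha=\prod_i x_i^{\alpha_i}$) is invertible. $L$ is a staircase if $\alpha\in L$, $\beta\le\alpha$ componentwise imply $\beta\in L$. The aberration is $A(w,L)=\frac1n\sum_{\alpha\in L}\sum_{i=1}^dw_i\alpha_i$. For a term ordering $\succ$, $L(D,\succ)$ is the set of exponents of monomials not divisible by leading terms of elements of the ideal $I(D)$ of polynomials vanishing on $D$; the algebraic fan is $\mathcal{L}_a(D)=\{L(D,\succ):\succ\text{ a term ordering}\}$. A staircase $L$ with $|L|=n$ is a corner cut if some affine hyperplane in $\mathbb{R}^d$ strictly separates $L$ from $\mathbb{Z}^d_{\ge0}\setminus L$. A design with $n$ points is generic if every corner cut staircase of size $n$ in $d$ dimensions is identifiable by it. *)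

From HB Require Import structures.
From mathcomp Require Import all_boot all_order all_algebra.
From mathcomp Require Import mpoly.
From mathcomp Require Import Rstruct.
From Stdlib Require Rdefinitions.
Notation R := Rdefinitions.R.
Set Implicit Arguments. Unset Strict Implicit. Unset Printing Implicit Defensive.
Import Order.TTheory GRing.Theory Num.Theory.
Local Open Scope ring_scope.


Definition point (d : nat) := {ffun 'I_d -> R}.
Definition expo (d : nat) := 'X_{1..d}.

Definition is_design (d n : nat) (D : seq (point d)) : Prop :=
  uniq D /\ size D = n.

Definition monval (d : nat) (x : point d) (a : expo d) : R :=
  \prod_(i < d) x i ^+ a i.

(* componentwise order on exponents (= divisibility of monomials) *)
Definition expo_le (d : nat) (b a : expo d) : Prop := forall i : 'I_d, (b i <= a i)%N :> Prop.

Definition staircase (d : nat) (L : seq (expo d)) : Prop :=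
  uniq L /\ forall a b : expo d, a \in L -> expo_le b a -> b \in L.

Definition design_matrix (d n : nat) (D : seq (point d)) (L : seq (expo d)) : 'M[R]_n :=
  \matrix_(i < n, j < n) monval (nth [ffun=> 0] D i) (nth 0%MM L j).

Definition identifiable (d n : nat) (D : seq (point d)) (L : seq (expo d)) : Prop :=
  uniq L /\ size L = n /\ size D = n /\ \det (design_matrix n D L) != 0.

Definition aberration (d n : nat) (w : 'I_d -> R) (L : seq (expo d)) : R :=
  (n%:R)^-1 * \sum_(a <- L) \sum_(i < d) w i * (a i)%:R.

Definition term_order (d : nat) (le : expo d -> expo d -> Prop) : Prop :=
  (forall a, le a a) /\
  [/\ (forall a b, le a b -> le b a -> a = b),
      (forall a b c, le a b -> le b c -> le a c),
      (forall a b, le a b \/ le b a),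
      (forall a, le 0%MM a) &
      (forall a b c, le a b -> le (a + c)%MM (b + c)%MM)].

Definition vanishes_on (d : nat) (D : seq (point d)) (f : {mpoly Rdefinitions.R[d]}) : Prop :=
  forall x, x \in D -> f.@[fun i => x i] = 0.

Definition leading_expo (d : nat) (le : expo d -> expo d -> Prop)
    (f : {mpoly Rdefinitions.R[d]}) (a : expo d) : Prop :=
  a \in msupp f /\ forall b, b \in msupp f -> le b a.

Definition in_L_of (d : nat) (D : seq (point d)) (le : expo d -> expo d -> Prop)
    (a : expo d) : Prop :=
  forall (f : {mpoly Rdefinitions.R[d]}) (b : expo d),
    vanishes_on D f -> f != 0 -> leading_expo le f b -> ~ expo_le b a.

Definition in_algebraic_fan (d : nat) (D : seq (point d)) (L : seq (expo d)) : Prop :=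
  uniq L /\ exists le, term_order le /\ forall a, a \in L <-> in_L_of D le a.

Definition corner_cut (d n : nat) (L : seq (expo d)) : Prop :=
  staircase L /\ size L = n /\
  exists (c : 'I_d -> R) (b : R),
    forall a : expo d,
      (a \in L -> \sum_(i < d) c i * (a i)%:R < b) /\
      (a \notin L -> \sum_(i < d) c i * (a i)%:R > b).

Definition generic (d n : nat) (D : seq (point d)) : Prop :=
  is_design n D /\ forall L, corner_cut n L -> identifiable n D L.

From HB Require Import structures.
From mathcomp Require Import all_boot all_order all_algebra.
From mathcomp Require Import mpoly.
From mathcomp Require Import Rstruct.
From Stdlib Require Rdefinitions.
From Stdlib Require Import Classical ClassicalEpsilon.
From mathcomp Require Import fingroup perm.
From mathcomp Require Import zify ring lra.
Import Order.TTheory GRing.Theory Num.Theory.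
Local Open Scope ring_scope.
Set Implicit Arguments. Unset Strict Implicit. Unset Printing Implicit Defensive.

(* Positive weights [c] give a term order (by weighted degree, ties broken by
   the order of multinomials), and a model [L] cut off from the exponents by a
   hyperplane [wdeg c = t] is the set of standard monomials of every design
   identifying it. A small perturbation of [w] makes the [n] exponents of
   least weighted degree such a corner cut, and the design with coordinates
   [2 ^ (N ^ k * M ^ i)] identifies every corner cut: its determinant is an
   alternating sum of distinct powers of 2. Conversely, any model in the
   algebraic fan of an [n]-point design has at least [n] elements, because
   (by Dickson's lemma) every monomial reduces modulo the vanishing ideal to
   standard ones, whose evaluation vectors must therefore span [R^n]. An
   exchange argument then compares the aberrations. *)

Lemma exists_min_from (h : nat -> nat) (N : nat) :
  exists i, (N <= i)%N /\ forall j, (N <= j)%N -> (h i <= h j)%N.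
Proof.
suff H v j : (N <= j)%N -> (h j <= v)%N ->
    exists i, (N <= i)%N /\ forall j, (N <= j)%N -> (h i <= h j)%N.
  exact: (H (h N) N).
elim: v j => [|v IH] j hj hv.
  by exists j; split=> // j' _; lia.
case: (classic (forall j', (N <= j')%N -> (h j <= h j')%N)) => [Hmin|].
  by exists j.
move=> /not_all_ex_not [j' Hj']; have [hj' hlt] := imply_to_and _ _ Hj'.
by apply: (IH j') => //; move/negP: hlt; lia.
Qed.

Lemma exists_nondecreasing_subseq (h : nat -> nat) :
  exists g : nat -> nat,
    (forall k, g k < g k.+1)%N /\ (forall k, h (g k) <= h (g k.+1))%N.
Proof.
pose ch N := proj1_sig (constructive_indefinite_description _ (exists_min_from h N)).
have chP N : (N <= ch N)%N /\ forall j, (N <= j)%N -> (h (ch N) <= h j)%N.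
  exact: proj2_sig (constructive_indefinite_description _ (exists_min_from h N)).
pose g := fix g k := if k is k'.+1 then ch (g k').+1 else ch 0%N.
pose start k := if k is k'.+1 then (g k').+1 else 0%N.
have gE k : g k = ch (start k) by case: k.
exists g; split=> k; first by case: (chP (g k).+1).
have start_le : (start k <= g k)%N by rewrite gE; case: (chP (start k)).
rewrite [in X in (X <= _)%N]gE; apply: (chP _).2; apply: leq_trans start_le _.
by case: (chP (g k).+1) => /ltnW.
Qed.

Lemma dickson_on d (cs : seq 'I_d) (s : nat -> expo d) :
  exists g : nat -> nat, (forall k, g k < g k.+1)%N /\
    forall c, c \in cs -> forall k, (s (g k) c <= s (g k.+1) c)%N.
Proof.
elim: cs => [|c cs [g [g_incr g_mono]]]; first by exists id.
have [g' [g'_incr g'_mono]] := exists_nondecreasing_subseq (fun k => s (g k) c).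
exists (g \o g'); split=> [k|c'].
  exact: homo_ltn ltn_trans g_incr _ _ (g'_incr k).
rewrite inE => /orP [/eqP -> // | c'cs] k.
exact: homo_leq leqnn leq_trans (g_mono c' c'cs) _ _ (ltnW (g'_incr k)).
Qed.

Lemma dickson d (s : nat -> expo d) : exists i j, (i < j)%N /\ expo_le (s i) (s j).
Proof.
have [g [g_incr g_mono]] := dickson_on (enum 'I_d) s.
by exists (g 0%N), (g 1%N); split=> // c; apply: g_mono; rewrite mem_enum.
Qed.

Definition radix m (K : nat) (x : 'I_m -> nat) : nat := (\sum_(i < m) K ^ i * x i)%N.

Lemma radix_recl m K (x : 'I_m.+1 -> nat) :
  radix K x = (x ord0 + K * radix K (fun i => x (lift ord0 i)))%N.
Proof.
rewrite /radix big_ord_recl expn0 mul1n big_distrr /=; congr (_ + _)%N.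
by apply: eq_bigr => i _; rewrite /bump /= add1n expnS mulnA.
Qed.

Lemma radix_inj m K (x y : 'I_m -> nat) :
  (forall i, x i < K)%N -> (forall i, y i < K)%N -> radix K x = radix K y -> x =1 y.
Proof.
elim: m x y => [|m IH] x y xK yK e i; first by case: i.
have K0 : (0 < K)%N by have := xK ord0; lia.
rewrite !radix_recl in e.
have e0 : x ord0 = y ord0.
  have := congr1 (modn^~ K) e.
  by rewrite ![(_ + K * _)%N]addnC ![(K * _)%N]mulnC !modnMDl !modn_small.
move: e; rewrite e0 => /addnI/eqP; rewrite eqn_pmul2l // => /eqP /IH e.
by case: (unliftP ord0 i) => [j ->|->] //; apply: e.
Qed.

Lemma radix_lt m K (x : 'I_m -> nat) : (forall i, x i < K)%N -> (radix K x < K ^ m)%N.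
Proof.
elim: m x => [|m IH] x xK; first by rewrite /radix big_ord0 expn0.
rewrite radix_recl expnS /=.
have K0 : (0 < K)%N := leq_ltn_trans (leq0n _) (xK ord0).
have := IH _ (fun j => xK (lift ord0 j)); rewrite -(leq_pmul2l K0) mulnS.
have := xK ord0; lia.
Qed.

Definition generic_point d (M N k : nat) : point d :=
  [ffun i : 'I_d => (2 : R) ^+ (N ^ k * M ^ i)].

Definition generic_design n d : seq (point d) :=
  [seq generic_point d n (n ^ d) k | k <- iota 0 n].

Lemma monval_generic_point d M N k (a : expo d) :
  monval (generic_point d M N k) a = 2 ^+ (N ^ k * radix M a).
Proof.
rewrite /monval; under eq_bigr => i _ do rewrite ffunE -exprM.
rewrite prodrXr; congr (_ ^+ _); rewrite /radix big_distrr /=.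
by apply: eq_bigr => i _; rewrite mulnA.
Qed.

Lemma size_generic_design n d : size (generic_design n d) = n.
Proof. by rewrite size_map size_iota. Qed.

Lemma nth_generic_design n d k : (k < n)%N ->
  nth [ffun=> 0] (generic_design n d) k = generic_point d n (n ^ d) k.
Proof. by move=> kn; rewrite (nth_map 0%N) ?size_iota // nth_iota. Qed.

Lemma uniq_generic_design n d : (0 < d)%N -> uniq (generic_design n d).
Proof.
move=> d0; rewrite map_inj_in_uniq ?iota_uniq // => k l.
rewrite !mem_iota /= => kn ln /(congr1 (fun x : point d => x (Ordinal d0))).
rewrite !ffunE /= expn0 !muln1.
have [n_le1|n_gt1] := leqP n 1; first by lia.
have base_gt1 : (1 < n ^ d)%N by rewrite -(subnKC d0) expnS; nia.
have two_pos : (0 : R) < 2 by lra.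
have two_neq1 : (2 : R) != 1 by apply/eqP; lra.
move=> /(ieexprIn two_pos two_neq1) /eqP.
by rewrite eqn_exp2l // => /eqP.
Qed.

(* The term of least exponent is not divisible by the next power of 2, while
   all the others are. *)
Lemma signed_sum_pow2_neq0 n (E : 'S_n -> nat) : injective E ->
  \sum_(s : 'S_n) (-1) ^+ s * (2 : int) ^+ E s != 0.
Proof.
move=> E_inj.
pose s0 := [arg min_(s < (1 : 'S_n)%g | true) E s].
have E_min s : (E s0 <= E s)%N.
  by rewrite /s0; case: arg_minnP => // s' _ s'_min; apply: s'_min.
rewrite (bigD1 s0) //=; apply/eqP => sum0.
have dvd_rest : (2 ^+ (E s0).+1 %| \sum_(s | s != s0) (-1) ^+ s * (2 : int) ^+ E s)%Z.
  apply: rpred_sum => s ss0; apply: dvdz_mull.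
  have lt : (E s0 < E s)%N.
    by rewrite ltn_neqAle E_min andbT; apply: contra ss0 => /eqP/E_inj ->.
  by rewrite -(subnKC lt) exprD dvdz_mulr.
have : (2 ^+ (E s0).+1 %| (-1) ^+ s0 * (2 : int) ^+ E s0)%Z.
  by move/eqP: sum0; rewrite addr_eq0 => /eqP ->; rewrite rpredN.
rewrite dvdzE abszM absz_sign mul1n !abszX /=.
move/dvdn_leq; rewrite expn_gt0 => /(_ isT).
by rewrite leq_exp2l // ltnn.
Qed.

(* The determinant is the image of an integer alternating sum of powers of 2
   whose exponents, read in base [n ^ d] and then in base [n], recover the
   permutation. *)
Lemma det_generic_design_neq0 n d (L : seq (expo d)) : uniq L -> size L = n ->
  (forall a : expo d, a \in L -> forall i, (a i < n)%N) ->
  \det (design_matrix n (generic_design n d) L) != 0.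
Proof.
move=> uL sL L_lt.
pose N := (n ^ d)%N.
pose E (s : 'S_n) := radix N (fun k => radix n (nth 0%MM L (s k))).
pose A : 'M[int]_n := \matrix_(k, j) 2 ^+ (N ^ k * radix n (nth 0%MM L j)).
have -> : design_matrix n (generic_design n d) L = map_mx intr A.
  apply/matrixP => k j.
  by rewrite !mxE nth_generic_design // monval_generic_point rmorphXn.
rewrite det_map_mx intr_eq0.
have -> : \det A = \sum_(s : 'S_n) (-1) ^+ s * 2 ^+ E s.
  apply: eq_bigr => s _; congr (_ * _).
  by rewrite /E /radix -prodrXr; apply: eq_bigr => k _; rewrite mxE.
have nthL (j : 'I_n) : nth 0%MM L j \in L by rewrite mem_nth ?sL.
have radix_ltN (j : 'I_n) : (radix n (nth 0%MM L j) < N)%N.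
  by apply: radix_lt => i; apply: L_lt.
apply: signed_sum_pow2_neq0 => s t /radix_inj st.
apply/permP => k; apply: val_inj; apply/eqP.
rewrite -(nth_uniq 0%MM _ _ uL) ?sL ?ltn_ord //; apply/eqP.
apply/(iffRL (mnmP _ _)).
apply: (@radix_inj _ n); [exact: L_lt (nthL _) | exact: L_lt (nthL _) |].
exact: st (fun i => radix_ltN (s i)) (fun i => radix_ltN (t i)) k.
Qed.

Definition axis d (i : 'I_d) (k : nat) : expo d := (U_(i) *+ k)%MM.

Lemma axisE d (i j : 'I_d) k : axis i k j = if i == j then k else 0%N.
Proof. by rewrite /axis mulmnE mnm1E; case: eqP; rewrite ?mul1n ?mul0n. Qed.

Lemma staircase_ltn_size d (L : seq (expo d)) : staircase L ->
  forall a : expo d, a \in L -> forall i, (a i < size L)%N.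
Proof.
move=> [uL L_down] a aL i.
have axis_uniq : uniq [seq axis i k | k <- iota 0 (a i).+1].
  rewrite map_inj_uniq ?iota_uniq // => k l /(congr1 (fun b : expo d => b i)).
  by rewrite !axisE eqxx.
have := uniq_leq_size axis_uniq; rewrite size_map size_iota; apply.
move=> b /mapP [k]; rewrite mem_iota => kle ->; apply: (L_down a) => // j.
by rewrite axisE; case: eqP => [<-|_] //; lia.
Qed.

Lemma generic_design_generic n d : (0 < d)%N -> generic n (generic_design n d).
Proof.
move=> d0; split.
  by split; [apply: uniq_generic_design | apply: size_generic_design].
move=> L [stL [sL _]]; have [uL _] := stL.
do 3?split => //; first exact: size_generic_design.
by apply: det_generic_design_neq0 => //; rewrite -sL; apply: staircase_ltn_size.
Qed.

Lemma expo_le_addr d (b a : expo d) : expo_le b a -> a = (b + (a - b))%MM.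
Proof. by move=> ba; rewrite addmC submK //; apply/mnm_lepP. Qed.

Lemma term_order_expo_le d (le : expo d -> expo d -> Prop) (b a : expo d) :
  term_order le -> expo_le b a -> le b a.
Proof.
move=> [_ [_ _ _ le0 leD]] /expo_le_addr ->.
by rewrite -{1}[b]addm0 ![(b + _)%MM]addmC; apply: leD.
Qed.

(* Dickson's lemma makes every term order a well-order. *)
Lemma term_order_no_descent d (le : expo d -> expo d -> Prop) (P : expo d -> Prop) :
  term_order le -> (forall a, P a -> exists a', (le a' a /\ a' <> a) /\ P a') ->
  forall a, ~ P a.
Proof.
move=> tle descent a0 Pa0; have [le_refl [le_anti le_trans _ _ _]] := tle.
pose Q a a' := (le a' a /\ a' <> a) /\ P a'.
pose next a := epsilon (inhabits 0%MM) (Q a).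
pose s := fix s k := if k is k'.+1 then next (s k') else a0.
have Ps k : P (s k).
  elim: k => [|k IH] //=.
  by case: (epsilon_spec (inhabits 0%MM) (Q (s k)) (descent _ IH)).
have s_step k : le (s k.+1) (s k) /\ s k.+1 <> s k.
  by case: (epsilon_spec (inhabits 0%MM) (Q (s k)) (descent _ (Ps k))).
have s_decr : {homo s : i j / (i <= j)%N >-> le j i}.
  apply: homo_leq => [//|y x z xy yz|k]; first exact: le_trans yz xy.
  by case: (s_step k).
have [i [j [ij sij]]] := dickson s.
have eij : s i = s j.
  by apply: le_anti; [exact: term_order_expo_le | exact/s_decr/ltnW].
case: (s_step i) => _; apply; apply: le_anti; first by case: (s_step i).
by rewrite eij; apply: s_decr.
Qed.

Lemma monvalD d (x : point d) (a b : expo d) :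
  monval x (a + b)%MM = monval x a * monval x b.
Proof. by rewrite /monval -big_split; apply: eq_bigr => i _; rewrite mnmDE exprD. Qed.

Section EvaluationVectors.

Variables (d n : nat) (D : seq (point d)).

Definition evalv (a : expo d) : 'rV[R]_n := \row_k monval (nth [ffun=> 0] D k) a.

Definition evalp (f : {mpoly R[d]}) : 'rV[R]_n :=
  \row_k f.@[fun i => nth [ffun=> 0] D k i].

Lemma evalpE f : evalp f = \sum_(a <- msupp f) f@_a *: evalv a.
Proof.
by apply/matrixP => i k; rewrite !mxE mevalE summxE; apply: eq_bigr => a _; rewrite !mxE.
Qed.

Lemma evalp_sub m (A : 'M[R]_(m, n)) f :
  (forall a, (evalv a <= A)%MS) -> (evalp f <= A)%MS.
Proof.
by move=> evA; rewrite evalpE; apply: summx_sub => a _; apply/scalemx_sub/evA.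
Qed.

(* A product of affine forms, one per other point, vanishes everywhere on [D]
   except at the [k]-th point. *)
Lemma evalp_delta : (0 < d)%N -> uniq D -> size D = n ->
  forall k : 'I_n, exists f, evalp f = delta_mx 0 k.
Proof.
move=> d0 uD sD k; pose x (l : 'I_n) := nth [ffun=> 0] D l.
pose sep l := odflt (Ordinal d0) [pick i | x l i != x k i].
have sepP l : l != k -> x l (sep l) != x k (sep l).
  move=> lk; rewrite /sep; case: pickP => [i //|same].
  suff : x l = x k.
    by move/eqP; rewrite nth_uniq ?sD // => /eqP/val_inj/eqP; rewrite (negbTE lk).
  by apply/ffunP => i; have /negbFE/eqP := same i.
pose c := \prod_(l < n | l != k) (x k (sep l) - x l (sep l)).
have c0 : c != 0 by apply/prodf_neq0 => l lk; rewrite subr_eq0 eq_sym sepP.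
exists (c^-1 *: \prod_(l < n | l != k) ('X_(sep l) - (x l (sep l))%:MP)).
apply/matrixP => i m; rewrite !mxE (ord1 i) mevalZ rmorph_prod /=.
under eq_bigr => l _ do rewrite mevalB mevalXU mevalC.
case: (eqVneq m k) => [->|mk]; first by rewrite mulVf.
by rewrite (bigD1 m) //= subrr mul0r mulr0.
Qed.

Lemma evalv_span_size m (A : 'M[R]_(m, n)) : (0 < d)%N -> uniq D -> size D = n ->
  (forall a, (evalv a <= A)%MS) -> (n <= m)%N.
Proof.
move=> d0 uD sD evA; suff /eqP <- : row_full A by apply: rank_leq_row.
rewrite -sub1mx; apply/row_subP => k; rewrite row1.
by have [f <-] := evalp_delta d0 uD sD k; apply: evalp_sub.
Qed.

Lemma evalv_vanishing_shift m (A : 'M[R]_(m, n)) f b c :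
  size D = n -> vanishes_on D f -> b \in msupp f ->
  (forall e, e \in msupp f -> e != b -> (evalv (e + c)%MM <= A)%MS) ->
  (evalv (b + c)%MM <= A)%MS.
Proof.
move=> sD van bf others.
have sum0 : \sum_(e <- msupp f) f@_e *: evalv (e + c)%MM = 0.
  apply/matrixP => i k; rewrite summxE [RHS]mxE.
  have kD : nth [ffun=> 0] D k \in D by rewrite mem_nth ?sD.
  transitivity (f.@[fun i => nth [ffun=> 0] D k i] * monval (nth [ffun=> 0] D k) c);
    last by rewrite van ?mul0r.
  rewrite mevalE big_distrl; apply: eq_bigr => e _.
  by rewrite !mxE monvalD mulrA.
move: sum0; rewrite (big_rem b) //= => /eqP; rewrite addr_eq0 => /eqP fb_evalv.
have fb0 : f@_b != 0 by rewrite -mcoeff_msupp.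
rewrite -[evalv _](scalerK fb0) fb_evalv scalerN -scaleNr; apply: scalemx_sub.
rewrite big_seq; apply: summx_sub => e; rewrite mem_rem_uniq ?msupp_uniq //.
by case/andP => /= eb ef; apply/scalemx_sub/others.
Qed.

End EvaluationVectors.

Lemma not_in_L_of d (D : seq (point d)) le (a : expo d) : ~ in_L_of D le a ->
  exists f b, [/\ vanishes_on D f, f != 0, leading_expo le f b & expo_le b a].
Proof.
move=> not_in; apply: NNPP => none; apply: not_in => f b van f0 lead ba.
by apply: none; exists f, b.
Qed.

Lemma standard_monomials_span d n (D : seq (point d)) le (L : seq (expo d))
    m (A : 'M[R]_(m, n)) :
  size D = n -> term_order le -> (forall a, a \in L <-> in_L_of D le a) ->
  (forall a, a \in L -> (evalv n D a <= A)%MS) -> forall a, (evalv n D a <= A)%MS.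
Proof.
move=> sD tle fanL LA a; apply/negPn/negP; move: a.
apply: (term_order_no_descent tle) => a notA.
have [f [b [van f0 [bf b_lead] ba]]] : exists f b,
    [/\ vanishes_on D f, f != 0, leading_expo le f b & expo_le b a].
  by apply: not_in_L_of => /fanL /LA; apply/negP.
have [_ [_ _ _ _ leD]] := tle.
have ae := expo_le_addr ba; set c := (a - b)%MM in ae.
apply: NNPP => no_smaller; apply/negP: notA; rewrite ae.
apply/negPn; apply: (evalv_vanishing_shift (f := f)) => // e ef eb.
apply/negPn/negP => notA.
apply: no_smaller; exists (e + c)%MM; split=> //; split.
  by rewrite ae; apply/leD/b_lead.
by rewrite ae => /addIm ebE; rewrite ebE eqxx in eb.
Qed.

Lemma size_algebraic_fan d n (D : seq (point d)) le (L : seq (expo d)) :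
  (0 < d)%N -> is_design n D -> term_order le ->
  (forall a, a \in L <-> in_L_of D le a) -> (n <= size L)%N.
Proof.
move=> d0 [uD sD] tle fanL.
pose A : 'M[R]_(size L, n) :=
  \matrix_(j, k) monval (nth [ffun=> 0] D k) (nth 0%MM L j).
apply: (evalv_span_size (A := A) d0 uD sD).
apply: (standard_monomials_span sD tle fanL) => a aL.
have aL' : (index a L < size L)%N by rewrite index_mem.
suff -> : evalv n D a = row (Ordinal aL') A by apply: row_sub.
by apply/matrixP => i k; rewrite !mxE /= nth_index.
Qed.

Definition wdeg d (c : 'I_d -> R) (a : expo d) : R := \sum_(i < d) c i * (a i)%:R.

Section WeightedDegree.

Variables (d : nat) (c : 'I_d -> R).

Lemma wdeg0 : wdeg c 0%MM = 0.
Proof. by rewrite /wdeg big1 // => i _; rewrite mnm0E mulr0. Qed.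

Lemma wdegD a b : wdeg c (a + b)%MM = wdeg c a + wdeg c b.
Proof.
by rewrite /wdeg -big_split; apply: eq_bigr => i _; rewrite mnmDE natrD mulrDr.
Qed.

Hypothesis c_ge0 : forall i, 0 <= c i.

Lemma wdeg_ge0 a : 0 <= wdeg c a.
Proof. by apply: sumr_ge0 => i _; apply: mulr_ge0. Qed.

Lemma wdeg_le a b : expo_le b a -> wdeg c b <= wdeg c a.
Proof. by move=> ba; apply: ler_sum => i _; rewrite ler_wpM2l // ler_nat. Qed.

End WeightedDegree.

Definition wdeg_le_order d (c : 'I_d -> R) (a b : expo d) : Prop :=
  wdeg c a < wdeg c b \/ (wdeg c a = wdeg c b /\ (a <= b)%O).

Lemma wdeg_term_order d (c : 'I_d -> R) :
  (forall i, 0 < c i) -> term_order (wdeg_le_order c).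
Proof.
move=> c_gt0; have c_ge0 i : 0 <= c i by apply: ltW.
split=> [a|]; first by right.
split=> [a b|a b e|a b|a|a b e].
- case=> [ab|[ab ab']] [ba|[ba ba']];
    [exfalso; move: ab ba; lra.. | by apply: le_anti; rewrite ab' ba'].
- case=> [ab|[ab ab']] [be|[be be']]; [left; lra|left; lra|left; lra|].
  by right; split; [lra|apply: le_trans be'].
- case: (ltrgtP (wdeg c a) (wdeg c b)) => ab; [by left; left|by right; left|].
  by case/orP: (le_total a b); [left|right]; right.
- have := wdeg_ge0 c_ge0 a; rewrite /wdeg_le_order wdeg0 le_eqVlt.
  case/orP=> [/eqP <-|]; last by left.
  by right; split; [|apply: le0x].
- rewrite /wdeg_le_order !wdegD ltrD2r.
  by case=> [|[-> ab]]; [left|right; rewrite lemc_add2l].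
Qed.

Definition separates d (c : 'I_d -> R) (t : R) (L : seq (expo d)) : Prop :=
  forall a, (a \in L -> wdeg c a < t) /\ (a \notin L -> wdeg c a > t).

Lemma big_sub_uniq (T : eqType) (s t : seq T) (F : T -> R) :
  uniq s -> uniq t -> {subset s <= t} ->
  (forall x, x \in t -> x \notin s -> F x = 0) ->
  \sum_(x <- t) F x = \sum_(x <- s) F x.
Proof.
move=> us ut st F0.
rewrite (bigID (mem s)) /= [X in _ + X]big1_seq ?addr0; last first.
  by move=> x /andP [xs xt]; apply: F0.
rewrite -big_filter; apply: perm_big; apply: uniq_perm; rewrite ?filter_uniq //.
by move=> x; rewrite mem_filter; apply: andb_idr; apply: st.
Qed.

Section IdentifiableModel.

Variables (d n : nat) (D : seq (point d)) (L : seq (expo d)).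
Hypotheses (uL : uniq L) (sL : size L = n) (sD : size D = n).
Hypothesis det_neq0 : \det (design_matrix n D L) != 0.

Let x (k : 'I_n) := nth [ffun=> 0] D k.

Let M_unit : design_matrix n D L \in unitmx.
Proof. by rewrite unitmxE unitfE. Qed.

Let mulM (g : 'cV[R]_n) k :
  (design_matrix n D L *m g) k 0 = \sum_(j < n) g j 0 * monval (x k) (nth 0%MM L j).
Proof. by rewrite !mxE; apply: eq_bigr => j _; rewrite !mxE mulrC. Qed.

Lemma vanishing_supp_eq0 f : {subset msupp f <= L} -> vanishes_on D f -> f = 0.
Proof.
move=> fL van; pose g : 'cV[R]_n := \col_j f@_(nth 0%MM L j).
have Mg : design_matrix n D L *m g = 0.
  apply/matrixP => k i; rewrite (ord1 i) mulM [RHS]mxE.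
  transitivity (f.@[fun i => x k i]); last by apply: van; rewrite mem_nth ?sD.
  rewrite mevalE -(big_sub_uniq (msupp_uniq f) uL fL); last first.
    by move=> e _ /memN_msupp_eq0 ->; rewrite mul0r.
  by rewrite (big_nth 0%MM) sL big_mkord; apply: eq_bigr => j _; rewrite mxE.
have g0 : g = 0 by rewrite -(mulKmx M_unit g) Mg mulmx0.
apply/mpolyP => e; rewrite mcoeff0; apply/eqP; rewrite mcoeff_eq0.
apply/negP => ef; have ie : (index e L < n)%N by rewrite -sL index_mem fL.
have /eqP := congr1 (fun h : 'cV[R]_n => h (Ordinal ie) 0) g0.
by rewrite !mxE /= nth_index ?fL // mcoeff_eq0 ef.
Qed.

(* [x^a] minus its interpolant on the model [L]. *)
Lemma exists_vanishing_reduction a : a \notin L -> exists f : {mpoly R[d]},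
  [/\ vanishes_on D f, f@_a = 1 & forall e, e \in msupp f -> e = a \/ e \in L].
Proof.
move=> aL; pose y : 'cV[R]_n := \col_k monval (x k) a.
pose g := invmx (design_matrix n D L) *m y.
exists ('X_[a] - \sum_(j < n) g j 0 *: 'X_[nth 0%MM L j]).
have coefE e : ('X_[a] - \sum_(j < n) g j 0 *: 'X_[nth 0%MM L j])@_e
    = (a == e)%:R - \sum_(j < n) g j 0 * (nth 0%MM L j == e)%:R.
  rewrite mcoeffB mcoeffX raddf_sum /=; congr (_ - _).
  by apply: eq_bigr => j _; rewrite mcoeffZ mcoeffX.
have notL e : e \notin L -> \sum_(j < n) g j 0 * (nth 0%MM L j == e)%:R = 0.
  move=> eL; apply: big1 => j _; suff /negbTE -> : nth 0%MM L j != e by rewrite mulr0.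
  by apply: contraNneq eL => <-; rewrite mem_nth ?sL.
split.
- move=> z zD; have iz : (index z D < n)%N by rewrite -sD index_mem.
  have zE : z = x (Ordinal iz) by rewrite /x nth_index.
  rewrite mevalB mevalX (big_morph _ (mevalD _) (meval0 _)).
  have := congr1 (fun h : 'cV[R]_n => h (Ordinal iz) 0) (mulKVmx M_unit y).
  rewrite mulM !mxE -zE => ev; apply/eqP; rewrite subr_eq0; apply/eqP.
  rewrite -[LHS]/(monval z a) -ev.
  by apply: eq_bigr => j _; rewrite mevalZ mevalX.
- by rewrite coefE eqxx notL ?subr0.
- move=> e; rewrite mcoeff_msupp coefE; case: (eqVneq a e) => [->|_ nz]; first by left.
  by right; apply: contraT => /notL S0; rewrite S0 subrr eqxx in nz.
Qed.

Lemma separates_in_algebraic_fan (c : 'I_d -> R) t :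
  (forall i, 0 < c i) -> separates c t L -> in_algebraic_fan D L.
Proof.
move=> c_gt0 sep; split=> //; exists (wdeg_le_order c).
split=> [|a]; first exact: wdeg_term_order.
split=> [aL f b van f0 [bf b_lead] ba|a_std].
  have c_ge0 i : 0 <= c i by apply: ltW.
  have bL : b \in L.
    apply: contraT => /(sep b).2.
    by have := (sep a).1 aL; have := wdeg_le c_ge0 ba; lra.
  apply: (negP f0); apply/eqP; apply: (vanishing_supp_eq0 _ van) => e ef.
  apply: contraT => /(sep e).2; have := (sep b).1 bL.
  by case: (b_lead e ef) => [|[->]]; lra.
apply/negPn/negP => aL; have [f [van fa f_supp]] := exists_vanishing_reduction aL.
have fa_supp : a \in msupp f by rewrite mcoeff_msupp fa oner_neq0.
apply: (a_std f a) => //; first by apply: contraTneq fa_supp => ->; rewrite msupp0.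
split=> // e /f_supp [->|eL]; first by right.
by left; have := (sep e).1 eL; have := (sep a).2 aL; lra.
Qed.

End IdentifiableModel.

Definition box d K : seq (expo d) :=
  [seq [multinom (f i : nat) | i < d]
  | f : {ffun 'I_d -> 'I_K.+1} <- enum {: {ffun 'I_d -> 'I_K.+1}}].

Lemma mem_box d K (a : expo d) : (a \in box d K) = [forall i, (a i <= K)%N].
Proof.
apply/idP/forallP => [/mapP [f _ ->] i|a_le]; first by rewrite mnmE -ltnS.
apply/mapP; exists [ffun i => inord (a i)]; first by rewrite mem_enum.
by apply/mnmP => i; rewrite mnmE ffunE inordK // ltnS.
Qed.

Lemma box_ltn d K (a : expo d) : a \in box d K -> forall i, (a i < K.+1)%N.
Proof. by rewrite mem_box => /forallP. Qed.

Lemma uniq_box d K : uniq (box d K).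
Proof.
rewrite map_inj_uniq ?enum_uniq // => f g /mnmP fg; apply/ffunP => i.
by apply: val_inj; have := fg i; rewrite !mnmE.
Qed.

Lemma size_box d K : size (box d K) = (K.+1 ^ d)%N.
Proof. by rewrite size_map -cardE card_ffun !card_ord. Qed.

Lemma notin_box_ge_axis d K (a : expo d) :
  a \notin box d K -> exists i, axis i K \in box d K /\ expo_le (axis i K) a.
Proof.
rewrite mem_box => /forallPn [i]; rewrite -ltnNge => K_lt; exists i; split.
  by rewrite mem_box; apply/forallP => j; rewrite axisE; case: eqP.
by move=> j; rewrite axisE; case: eqP => [<-|//]; apply: ltnW.
Qed.

Lemma exists_pos_lower_bound (s : seq R) : (forall x, x \in s -> 0 < x) ->
  exists2 e, 0 < e & forall x, x \in s -> e <= x.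
Proof.
elim: s => [|y s IH] s_gt0; first by exists 1.
have [e e_gt0 e_le] : exists2 e, 0 < e & forall x, x \in s -> e <= x.
  by apply: IH => x xs; apply: s_gt0; rewrite inE xs orbT.
have y_gt0 : 0 < y by apply: s_gt0; rewrite inE eqxx.
exists (Num.min e y) => [|x]; first by rewrite lt_min e_gt0 y_gt0.
by rewrite inE => /orP [/eqP ->|xs]; rewrite ge_min ?lexx ?orbT ?e_le.
Qed.

(* Adding [eps * (K + 1) ^ i] to the weights makes the weighted degree
   injective on the box (base [K + 1] digits), and for [eps] small enough it
   cannot reverse a strict inequality between weighted degrees on the box. *)
Lemma perturbed_weight d K (w : 'I_d -> R) : (forall i, 0 < w i) ->
  exists c : 'I_d -> R, [/\ forall i, 0 < c i,
    {in box d K &, injective (wdeg c)} &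
    {in box d K &, forall a b, wdeg w a < wdeg w b -> wdeg c a < wdeg c b}].
Proof.
move=> w_gt0; pose B := box d K; pose U := (K.+1 ^ d)%N.
have radix_B a : a \in B -> (radix K.+1 a < U)%N.
  by move/box_ltn; apply: radix_lt.
pose gaps := [seq wdeg w p.2 - wdeg w p.1 | p <- [seq (a, b) | a <- B, b <- B] &
  wdeg w p.1 < wdeg w p.2].
have [del del_gt0 del_le] : exists2 del, 0 < del & forall x, x \in gaps -> del <= x.
  apply: exists_pos_lower_bound => x /mapP [p].
  by rewrite mem_filter => /andP [p_lt _] ->; rewrite subr_gt0.
have U_gt0 : 0 < U%:R + 1 :> R by rewrite ltr_wpDl.
pose eps := del / (U%:R + 1).
have eps_gt0 : 0 < eps by rewrite divr_gt0.
have eps_small a : a \in B -> eps * (radix K.+1 a)%:R < del.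
  move=> aB; apply: (@le_lt_trans _ _ (eps * U%:R)).
    by rewrite ler_pM2l // ler_nat ltnW ?radix_B.
  by rewrite /eps mulrAC ltr_pdivrMr // ltr_pM2l // ltrDl.
pose c i := w i + eps * (K.+1 ^ i)%:R.
have wdeg_c a : wdeg c a = wdeg w a + eps * (radix K.+1 a)%:R.
  rewrite /wdeg /radix natr_sum mulr_sumr -big_split /=.
  by apply: eq_bigr => i _; rewrite /c natrM; ring.
have c_mono : {in B &, forall a b, wdeg w a < wdeg w b -> wdeg c a < wdeg c b}.
  move=> a b aB bB ab.
  have gap : wdeg w b - wdeg w a \in gaps.
    apply/mapP; exists (a, b) => //; rewrite mem_filter ab /=.
    by apply/allpairsP; exists (a, b).
  have := del_le _ gap; have := eps_small _ aB.
  have : 0 <= eps * (radix K.+1 b)%:R by rewrite mulr_ge0 ?ler0n ?ltW.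
  by rewrite !wdeg_c; lra.
exists c; split=> // [i|a b aB bB abc].
  have : 0 <= eps * (K.+1 ^ i)%:R by rewrite mulr_ge0 ?ler0n ?ltW.
  by have := w_gt0 i; rewrite /c; lra.
case: (ltrgtP (wdeg w a) (wdeg w b)) => ab.
- by have := c_mono _ _ aB bB ab; rewrite abc ltxx.
- by have := c_mono _ _ bB aB ab; rewrite abc ltxx.
move: abc; rewrite !wdeg_c ab => /addrI /(mulfI (lt0r_neq0 eps_gt0)) /eqP.
rewrite eqr_nat => /eqP ab_radix; apply/(iffRL (mnmP _ _)).
exact: radix_inj (box_ltn aB) (box_ltn bB) ab_radix.
Qed.

Lemma exists_threshold (T : eqType) (f : T -> R) (B : seq T) n :
  uniq B -> {in B &, injective f} -> (0 < n < size B)%N ->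
  exists t, count (fun b => f b < t) B = n /\ {in B, forall b, f b != t}.
Proof.
move=> uB f_inj /andP [n_gt0 n_lt].
pose V := sort <=%R (map f B).
have perm_V : perm_eq V (map f B) by rewrite perm_sort.
have sV : size V = size B by rewrite size_sort size_map.
have V_le i j : (i <= j < size V)%N -> nth 0 V i <= nth 0 V j.
  move=> /andP [ij jV].
  apply: (sorted_leq_nth le_trans lexx _ (sort_le_sorted _)) => //.
  by rewrite inE (leq_ltn_trans ij).
have V_lt : nth 0 V n.-1 < nth 0 V n.
  apply: (sorted_ltn_nth lt_trans); rewrite ?inE ?sV ?prednK //; last exact: ltnW.
  by rewrite sort_lt_sorted map_inj_in_uniq.
pose t := (nth 0 V n.-1 + nth 0 V n) / 2.
have below i : (i < n)%N -> nth 0 V i < t.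
  move=> i_lt; have : nth 0 V i <= nth 0 V n.-1 by apply: V_le; rewrite sV; lia.
  by rewrite /t; lra.
have above i : (n <= i < size V)%N -> t < nth 0 V i.
  by move=> /V_le; rewrite /t; lra.
exists t; split.
  rewrite -(count_map f (fun x => x < t)) -(seq.permP perm_V).
  rewrite -(cat_take_drop n V) count_cat.
  have n_le : (n <= size V)%N by rewrite sV ltnW.
  have /eqP -> : count (<%R^~ t) (take n V) == size (take n V).
    rewrite -all_count; apply/(all_nthP 0) => i; rewrite size_takel // => i_lt.
    by rewrite nth_take // below.
  suff /eqP -> : count (<%R^~ t) (drop n V) == 0%N by rewrite size_takel ?addn0.
  rewrite eqn0Ngt -has_count; apply/(has_nthP 0) => -[i].
  rewrite size_drop nth_drop => i_lt; apply/negP.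
  by rewrite -leNgt ltW // above // leq_addr /= -ltn_subRL.
move=> b bB; have fbV : f b \in V by rewrite (perm_mem perm_V) map_f.
rewrite -(nth_index 0 fbV); have := index_mem (f b) V; rewrite fbV.
case: (ltnP (index (f b) V) n) => [/below /lt_eqF -> //|n_le iV].
by rewrite gt_eqF // above ?n_le.
Qed.

Lemma separates_staircase d (c : 'I_d -> R) t (L : seq (expo d)) :
  (forall i, 0 <= c i) -> uniq L -> separates c t L -> staircase L.
Proof.
move=> c_ge0 uL sep; split=> // a b aL ba; apply: contraT => /(sep b).2.
by have := (sep a).1 aL; have := wdeg_le c_ge0 ba; lra.
Qed.

(* Cut the box [0, n]^d by a generic perturbation of [w]: the [n] lightest
   exponents of the box form a corner cut, lying below every axis point
   [n e_i], and hence below everything outside the box. *)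
Lemma exists_wdeg_min_corner_cut n d (w : 'I_d -> R) :
  (0 < n)%N -> (0 < d)%N -> (forall i, 0 < w i) ->
  exists (c : 'I_d -> R) (t : R) (L : seq (expo d)),
  [/\ forall i, 0 < c i, uniq L, size L = n, separates c t L &
      forall a b, a \in L -> b \notin L -> wdeg w a <= wdeg w b].
Proof.
move=> n_gt0 d_gt0 w_gt0; pose B := box d n.
have [c [c_gt0 c_inj c_mono]] := perturbed_weight n w_gt0.
have c_ge0 i : 0 <= c i by apply: ltW.
have n_lt : (0 < n < size B)%N.
  rewrite n_gt0 size_box -(subnKC d_gt0) expnS.
  by have := expn_gt0 n.+1 (d - 1); nia.
have [t [count_t t_neq]] := exists_threshold (uniq_box d n) c_inj n_lt.
pose L := [seq a <- B | wdeg c a < t].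
have memL a : (a \in L) = (a \in B) && (wdeg c a < t) by rewrite mem_filter andbC.
have uL : uniq L by rewrite filter_uniq ?uniq_box.
have sL : size L = n by rewrite size_filter.
have sep_box b : b \in B -> b \notin L -> t < wdeg c b.
  by move=> bB; rewrite memL bB /= -leNgt le_eqVlt eq_sym (negbTE (t_neq b bB)).
have stL : staircase L.
  split=> // a b; rewrite !memL => /andP [aB a_lt] ba; apply/andP; split.
    rewrite mem_box; apply/forallP => i.
    by apply: leq_trans (ba i) _; rewrite -ltnS box_ltn.
  by apply: le_lt_trans a_lt; apply: wdeg_le.
have box_below b : b \notin L -> exists2 b', b' \in B /\ b' \notin L & expo_le b' b.
  move=> bL; case: (boolP (b \in B)) => [bB|/notin_box_ge_axis [i [iB ib]]].
    by exists b.
  exists (axis i n) => //; split=> //; apply/negP => /(staircase_ltn_size stL)/(_ i).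
  by rewrite sL axisE eqxx ltnn.
exists c, t, L; split=> // [a|a b aL /box_below [b' [b'B b'L] b'b]].
  split=> [|/box_below [b' [b'B b'L] b'b]]; first by rewrite memL => /andP [].
  by apply: lt_le_trans (sep_box _ b'B b'L) (wdeg_le c_ge0 b'b).
apply: le_trans (wdeg_le (fun i => ltW (w_gt0 i)) b'b).
move: aL; rewrite memL leNgt => /andP [aB a_lt]; apply/negP.
by move=> /(c_mono _ _ b'B aB); have := sep_box _ b'B b'L; lra.
Qed.

Lemma sum_le_pairwise (X Y : seq R) : (size X <= size Y)%N ->
  (forall x y, x \in X -> y \in Y -> x <= y) -> (forall y, y \in Y -> 0 <= y) ->
  \sum_(x <- X) x <= \sum_(y <- Y) y.
Proof.
elim: X Y => [|x X IH] Y sXY XY Y_ge0; first by rewrite big_nil big_seq sumr_ge0.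
case: Y sXY XY Y_ge0 => [//|y Y] /= sXY XY Y_ge0.
rewrite !big_cons; apply: lerD; first by rewrite XY ?mem_head.
apply: IH => // [x' y' x'X y'Y|y' y'Y].
  by rewrite XY // inE ?x'X ?y'Y orbT.
by rewrite Y_ge0 // inE y'Y orbT.
Qed.

(* Both sums contain the terms indexed by the elements common to [S] and [U];
   the remaining ones are compared termwise. *)
Lemma sum_le_exchange (T : eqType) (f : T -> R) (S U : seq T) :
  uniq S -> uniq U -> (size S <= size U)%N ->
  (forall a b, a \in S -> b \notin S -> f a <= f b) -> (forall a, 0 <= f a) ->
  \sum_(a <- S) f a <= \sum_(a <- U) f a.
Proof.
move=> uS uU sSU f_lt f_ge0.
rewrite (bigID (mem U)) [X in _ <= X](bigID (mem S)) /=.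
have common : perm_eq [seq a <- S | a \in U] [seq a <- U | a \in S].
  by apply: uniq_perm; rewrite ?filter_uniq // => a; rewrite !mem_filter andbC.
rewrite -[\sum_(a <- S | a \in U) f a]big_filter.
rewrite -[\sum_(a <- U | a \in S) f a]big_filter (perm_big _ common) lerD2l.
rewrite -[\sum_(a <- S | _) f a]big_filter -[\sum_(a <- U | _) f a]big_filter.
rewrite -[X in X <= _](big_map f xpredT id) -[X in _ <= X](big_map f xpredT id).
apply: sum_le_pairwise.
- have countC V W : count (fun a => a \notin V) W = (size W - count (mem V) W)%N.
    by rewrite -(count_predC (mem V) W) addKn.
  rewrite !size_map !size_filter !countC -!size_filter (perm_size common).
  exact: leq_sub2r.
- move=> x y /mapP [a]; rewrite mem_filter => /andP [_ aS] -> /mapP [b].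
  by rewrite mem_filter => /andP [bS _] ->; apply: f_lt.
- by move=> y /mapP [b _ ->].
Qed.

Theorem theorem4 (n d : nat) (w : 'I_d -> R) :
  (0 < n)%N -> (0 < d)%N -> (forall i, 0 < w i) ->
  exists (D : seq (point d)) (L : seq (expo d)),
    [/\ generic n D, in_algebraic_fan D L &
        forall (D' : seq (point d)) (L' : seq (expo d)),
          is_design n D' -> in_algebraic_fan D' L' ->
          aberration n w L <= aberration n w L'].
Proof.
move=> n_gt0 d_gt0 w_gt0.
have [c [t [L [c_gt0 uL sL sep L_min]]]] :=
  exists_wdeg_min_corner_cut n_gt0 d_gt0 w_gt0.
have stL : staircase L := separates_staircase (fun i => ltW (c_gt0 i)) uL sep.
have cornerL : corner_cut n L by split=> //; split=> //; exists c, t.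
have genD := generic_design_generic n d_gt0.
exists (generic_design n d), L; split=> //.
  have [_ [_ [sD det_neq0]]] := genD.2 L cornerL.
  exact: separates_in_algebraic_fan uL sL sD det_neq0 c t c_gt0 sep.
move=> D' L' designD' [uL' [le [tle fanL']]].
rewrite /aberration ler_wpM2l ?invr_ge0 ?ler0n //.
apply: (sum_le_exchange (f := wdeg w)) => //.
  by rewrite sL (size_algebraic_fan d_gt0 designD' tle fanL').
by move=> a; apply: wdeg_ge0 => i; apply: ltW.
Qed.
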